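(* Let $F/E$ be a finite field extension and assume that either $F/E$ is quadratic, or $F/E$ has prime degree $p$ and $E$ has no nontrivial finite extension of degree prime to $p$. Then $K^{MW}_*(F)$ is generated as a left $K^{MW}_*(E)$-module (via restriction) by the elements $[\beta]$, $\beta\in F^\times$ (together with $1$).
   Context: $K^{MW}_*(F)$ is Morel's Milnor–Witt K-theory: the $\mathbb{Z}$-graded ring generated by symbols $[a]$ ($a\in F^\times$, degree $1$) and $\eta$ (degree $-1$) subject to $[a][1-a]=0$, $[ab]=[a]+[b]+\eta[a][b]$, $\eta[a]=[a]\eta$, $\eta(2+\eta[-1])=0$. It is a $K^{MW}_*(E)$-module via the restriction ring map $K^{MW}_*(E)\to K^{MW}_*(F)$. *)

From HB Require Import structures.
From mathcomp Require Import all_boot all_order all_algebra vector falgebra fieldext.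
Set Implicit Arguments. Unset Strict Implicit. Unset Printing Implicit Defensive.
Import GRing.Theory.
Local Open Scope ring_scope.

(* Milnor–Witt K-theory K^MW_*(K) of a field K, presented by generators and
   relations.  We use the total (ungraded) associative unital ring; since all
   relations are homogeneous, it is the direct sum of the graded pieces. *)

Definition unitF (K : fieldType) := {x : K | x != 0}.

Inductive mwterm (K : fieldType) : Type :=
| MWsym  of unitF K              (* the symbol [a], degree 1 *)
| MWeta                           (* eta, degree -1 *)
| MW0
| MW1
| MWadd  of mwterm K & mwterm K
| MWopp  of mwterm K
| MWmul  of mwterm K & mwterm K.

Arguments MWeta {K}. Arguments MW0 {K}. Arguments MW1 {K}.

Definition MW2 {K : fieldType} : mwterm K := MWadd MW1 MW1.

Inductive mweq (K : fieldType) : mwterm K -> mwterm K -> Prop :=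
| mweq_refl x : mweq x x
| mweq_sym x y : mweq x y -> mweq y x
| mweq_trans x y z : mweq x y -> mweq y z -> mweq x z
| mweq_add x x' y y' : mweq x x' -> mweq y y' -> mweq (MWadd x y) (MWadd x' y')
| mweq_opp x x' : mweq x x' -> mweq (MWopp x) (MWopp x')
| mweq_mul x x' y y' : mweq x x' -> mweq y y' -> mweq (MWmul x y) (MWmul x' y')
| mweq_addA x y z : mweq (MWadd x (MWadd y z)) (MWadd (MWadd x y) z)
| mweq_addC x y : mweq (MWadd x y) (MWadd y x)
| mweq_add0 x : mweq (MWadd MW0 x) x
| mweq_addN x : mweq (MWadd (MWopp x) x) MW0
| mweq_mulA x y z : mweq (MWmul x (MWmul y z)) (MWmul (MWmul x y) z)
| mweq_mul1l x : mweq (MWmul MW1 x) x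
| mweq_mul1r x : mweq (MWmul x MW1) x
| mweq_mulDl x y z : mweq (MWmul (MWadd x y) z) (MWadd (MWmul x z) (MWmul y z))
| mweq_mulDr x y z : mweq (MWmul x (MWadd y z)) (MWadd (MWmul x y) (MWmul x z))
| mweq_steinberg (a b : unitF K) : val a + val b = 1 ->
    mweq (MWmul (MWsym a) (MWsym b)) MW0
| mweq_symM (a b c : unitF K) : val c = val a * val b ->
    mweq (MWsym c)
         (MWadd (MWadd (MWsym a) (MWsym b)) (MWmul MWeta (MWmul (MWsym a) (MWsym b))))
| mweq_etaC (a : unitF K) : mweq (MWmul MWeta (MWsym a)) (MWmul (MWsym a) MWeta)
| mweq_hyp (m : unitF K) : val m = -1 ->
    mweq (MWmul MWeta (MWadd MW2 (MWmul MWeta (MWsym m)))) MW0.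

Section Restriction.
Variables (E : fieldType) (F : fieldExtType E).

Lemma in_alg_neq0 (a : unitF E) : (val a)%:A != 0 :> F.
Proof. by rewrite -in_algE fmorph_eq0; exact: valP a. Qed.

Definition res_unit (a : unitF E) : unitF F := exist (fun x : F => x != 0) ((val a)%:A) (in_alg_neq0 a).

Fixpoint mwres (t : mwterm E) : mwterm F :=
  match t with
  | MWsym a => MWsym (res_unit a)
  | MWeta => MWeta
  | MW0 => MW0
  | MW1 => MW1
  | MWadd x y => MWadd (mwres x) (mwres y)
  | MWopp x => MWopp (mwres x)
  | MWmul x y => MWmul (mwres x) (mwres y)
  end.
End Restriction.

Definition mwsum (K : fieldType) (s : seq (mwterm K)) : mwterm K :=
  foldr (@MWadd K) MW0 s.

Definition mwgen (K : fieldType) (o : option (unitF K)) : mwterm K :=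
  if o is Some b then MWsym b else MW1.

From HB Require Import structures.
From mathcomp Require Import all_boot all_order all_algebra vector falgebra fieldext.
From mathcomp Require Import qpoly qfpoly ring.
From mathcomp Require boolp.
Set Implicit Arguments. Unset Strict Implicit. Unset Printing Implicit Defensive.
Import GRing.Theory.
Local Open Scope ring_scope.

(* 1. We build the ring K^MW(K) as the (classical) quotient of the term
      algebra [mwterm K] by [mweq], so that ring identities can be used.
   2. In any ring R with a map [sym : K -> R] and an element [eta]
      satisfying the Milnor-Witt relations we derive the standard
      identities: [ab] = [a] + <a>[b] with <a> = 1 + eta[a], [a][-a] = 0,
      [b][a] = -<-1>[a][b], [a][a] = [-1][a], and a "two-linear-forms"
      consequence of the Steinberg relation.
   3. Field theory: under the hypothesis, every element of F outside E
      generates F, and every nonzero element of F is a nonzero constant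
      times a product of linear factors (al - a), a in E.
   4. Fix such al.  The left submodule generated over (the image of)
      K^MW(E) by 1 and the symbols [al - a] contains 1 and is stable under
      right multiplication by eta and by every symbol [b]; hence it is all
      of K^MW(F), which gives the theorem. *)

Section KMWQuotient.
Variable K : fieldType.
Local Notation term := (mwterm K).

Definition KMW : Type := {P : term -> Prop | exists t, P = mweq t}.
Definition kmw (t : term) : KMW := exist _ (mweq t) (ex_intro _ t erefl).
Definition kmw_repr (q : KMW) : term := proj1_sig (boolp.cid (proj2_sig q)).

Lemma KMW_ext (P Q : term -> Prop) hP hQ : P = Q ->
  exist (fun P => exists t, P = mweq t) P hP = exist _ Q hQ.
Proof. by move=> eqPQ; subst; congr exist; exact: boolp.Prop_irrelevance. Qed.

Lemma kmw_reprK q : kmw (kmw_repr q) = q.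
Proof.
case: q => P hP; rewrite /kmw_repr /kmw /=; case: (boolp.cid hP) => r eqP /=.
exact: KMW_ext.
Qed.

Lemma kmw_eqP t u : kmw t = kmw u <-> mweq t u.
Proof.
split=> [eqtu|tu].
  have /= -> := congr1 (fun q : KMW => proj1_sig q u) eqtu; exact: mweq_refl.
apply: KMW_ext; apply: boolp.funext => x; apply: boolp.propext.
by split=> [tx|ux]; [exact: mweq_trans (mweq_sym tu) tx | exact: mweq_trans tu ux].
Qed.

Lemma kmw_reprE t : mweq (kmw_repr (kmw t)) t.
Proof. by apply/kmw_eqP; rewrite kmw_reprK. Qed.

Definition kmw_add q r := kmw (MWadd (kmw_repr q) (kmw_repr r)).
Definition kmw_mul q r := kmw (MWmul (kmw_repr q) (kmw_repr r)).
Definition kmw_opp q := kmw (MWopp (kmw_repr q)).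

HB.instance Definition _ := boolp.gen_eqMixin KMW.
HB.instance Definition _ := boolp.gen_choiceMixin KMW.

Local Notation reprE := (kmw_reprE _).
Local Notation reprE' := (mweq_sym (kmw_reprE _)).
Local Notation refl := (mweq_refl _).

Lemma kmw_addA : associative kmw_add.
Proof.
move=> a b c; apply/kmw_eqP; apply: mweq_trans (mweq_add refl reprE) _.
by apply: mweq_trans (mweq_addA _ _ _) _; exact: mweq_add reprE' refl.
Qed.

Lemma kmw_addC : commutative kmw_add.
Proof. by move=> a b; apply/kmw_eqP; exact: mweq_addC. Qed.

Lemma kmw_add0 : left_id (kmw MW0) kmw_add.
Proof.
move=> a; rewrite /kmw_add -{2}(kmw_reprK a); apply/kmw_eqP.
by apply: mweq_trans (mweq_add reprE refl) _; exact: mweq_add0.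
Qed.

Lemma kmw_addN : left_inverse (kmw MW0) kmw_opp kmw_add.
Proof.
move=> a; apply/kmw_eqP.
by apply: mweq_trans (mweq_add reprE refl) _; exact: mweq_addN.
Qed.

Lemma kmw_mulA : associative kmw_mul.
Proof.
move=> a b c; apply/kmw_eqP; apply: mweq_trans (mweq_mul refl reprE) _.
by apply: mweq_trans (mweq_mulA _ _ _) _; exact: mweq_mul reprE' refl.
Qed.

Lemma kmw_mul1l : left_id (kmw MW1) kmw_mul.
Proof.
move=> a; rewrite /kmw_mul -{2}(kmw_reprK a); apply/kmw_eqP.
by apply: mweq_trans (mweq_mul reprE refl) _; exact: mweq_mul1l.
Qed.

Lemma kmw_mul1r : right_id (kmw MW1) kmw_mul.
Proof.
move=> a; rewrite /kmw_mul -{2}(kmw_reprK a); apply/kmw_eqP.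
by apply: mweq_trans (mweq_mul refl reprE) _; exact: mweq_mul1r.
Qed.

Lemma kmw_mulDl : left_distributive kmw_mul kmw_add.
Proof.
move=> a b c; apply/kmw_eqP; apply: mweq_trans (mweq_mul reprE refl) _.
by apply: mweq_trans (mweq_mulDl _ _ _) _; exact: mweq_add reprE' reprE'.
Qed.

Lemma kmw_mulDr : right_distributive kmw_mul kmw_add.
Proof.
move=> a b c; apply/kmw_eqP; apply: mweq_trans (mweq_mul refl reprE) _.
by apply: mweq_trans (mweq_mulDr _ _ _) _; exact: mweq_add reprE' reprE'.
Qed.

HB.instance Definition _ := GRing.isPzRing.Build KMW kmw_addA kmw_addC kmw_add0
  kmw_addN kmw_mulA kmw_mul1l kmw_mul1r kmw_mulDl kmw_mulDr.

Lemma kmwD x y : kmw (MWadd x y) = kmw x + kmw y.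
Proof. by apply/kmw_eqP; apply: mweq_add; exact: reprE'. Qed.
Lemma kmwM x y : kmw (MWmul x y) = kmw x * kmw y.
Proof. by apply/kmw_eqP; apply: mweq_mul; exact: reprE'. Qed.
Lemma kmwN x : kmw (MWopp x) = - kmw x.
Proof. by apply/kmw_eqP; apply: mweq_opp; exact: reprE'. Qed.
Lemma kmw0 : kmw MW0 = 0. Proof. by []. Qed.
Lemma kmw1 : kmw MW1 = 1. Proof. by []. Qed.
End KMWQuotient.

Section MilnorWittIdentities.
Variables (R : pzRingType) (K : fieldType) (sym : K -> R) (eta : R).
Hypothesis sym_steinberg : forall a, a != 0 -> a != 1 -> sym a * sym (1 - a) = 0.
Hypothesis symM_rel : forall a b, a != 0 -> b != 0 ->
  sym (a * b) = sym a + sym b + eta * (sym a * sym b).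
Hypothesis eta_symC : forall a, eta * sym a = sym a * eta.
Hypothesis eta_hyperbolic : eta * (1 + 1 + eta * sym (-1)) = 0.

Lemma sym1 : sym 1 = 0.
Proof.
set x := sym 1; set m := sym (-1).
have n1 : (-1 : K) != 0 by rewrite oppr_eq0 oner_neq0.
have x_sq : x = x + x + eta * (x * x) by rewrite /x -symM_rel ?mulr1 ?oner_neq0.
have x_m : x = m + m + eta * (m * m) by rewrite /x /m -symM_rel // mulrNN mulr1.
have eta_x : eta * x = 0.
  have -> : eta * x = eta * (1 + 1 + eta * m) * m.
    by rewrite x_m !mulrDr !mulrDl !mulr1 ?mul1r !mulrA.
  by rewrite eta_hyperbolic mul0r.
have : x + eta * (x * x) = 0 by apply: (addrI x); rewrite addr0 addrA -x_sq.
by rewrite mulrA eta_x mul0r addr0.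
Qed.

(* The Pfister form <a> = 1 + eta[a]; locked so that ring rewriting does
   not unfold it. *)
Fact pform_key : unit. Proof. exact: tt. Qed.
Definition pform a := locked_with pform_key (1 + eta * sym a).
Lemma pformE a : pform a = 1 + eta * sym a. Proof. by rewrite /pform unlock. Qed.

Lemma eta_symsymC a b : a != 0 -> b != 0 ->
  eta * (sym a * sym b) = eta * (sym b * sym a).
Proof.
move=> a0 b0; have := symM_rel a0 b0; rewrite mulrC symM_rel // => /eqP.
by rewrite [sym b + sym a]addrC (inj_eq (addrI _)) => /eqP ->.
Qed.

Lemma pform_symC a b : a != 0 -> b != 0 -> pform a * sym b = sym b * pform a.
Proof.
move=> a0 b0; rewrite !pformE mulrDl mulrDr mul1r mulr1; congr (_ + _).
by rewrite -mulrA eta_symsymC // mulrA eta_symC -mulrA.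
Qed.

Lemma symML a b : a != 0 -> b != 0 -> sym (a * b) = sym a + pform a * sym b.
Proof. by move=> a0 b0; rewrite symM_rel // !pformE mulrDl mul1r addrA mulrA. Qed.

Lemma symMR a b : a != 0 -> b != 0 -> sym (a * b) = sym b + sym a * pform b.
Proof.
move=> a0 b0; rewrite symM_rel // !pformE mulrDr mulr1 [sym a * (eta * sym b)]mulrA.
by rewrite -eta_symC -mulrA addrA [sym b + sym a]addrC.
Qed.

Lemma pformM a b : a != 0 -> b != 0 -> pform (a * b) = pform a * pform b.
Proof.
move=> a0 b0; rewrite !pformE symM_rel // !mulrDr !mulrDl !mul1r !mulr1 !addrA.
by congr (_ + _); rewrite !mulrA -[eta * sym a * eta]mulrA -eta_symC mulrA.
Qed.

Lemma pform1 : pform 1 = 1.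
Proof. by rewrite !pformE sym1 mulr0 addr0. Qed.

Lemma pformV a : a != 0 -> pform a * pform a^-1 = 1.
Proof. by move=> a0; rewrite -pformM ?invr_eq0 // mulfV // pform1. Qed.

Lemma pformVl a : a != 0 -> pform a^-1 * pform a = 1.
Proof. by move=> a0; rewrite -pformM ?invr_eq0 // mulVf // pform1. Qed.

Lemma symV a : a != 0 -> sym a = - (pform a * sym a^-1).
Proof.
move=> a0; apply/eqP; rewrite -addr_eq0 -symML ?invr_eq0 // mulfV // sym1 //.
Qed.

(* [a][-a] = 0, from the Steinberg relations for a and a^-1. *)
Lemma sym_symN a : a != 0 -> sym a * sym (- a) = 0.
Proof.
move=> a0; have [->|a1] := eqVneq a 1; first by rewrite sym1 mul0r.
have na0 : - a != 0 by rewrite oppr_eq0.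
have ai0 : a^-1 != 0 by rewrite invr_eq0.
have ai1 : a^-1 != 1 by apply: contra a1 => /eqP h; rewrite -[a]invrK h invr1.
have b0 : 1 - a != 0 by rewrite subr_eq0 eq_sym.
have d0 : 1 - a^-1 != 0 by rewrite subr_eq0 eq_sym.
have one_sub : 1 - a = (- a) * (1 - a^-1) by field.
have st_a : sym a * sym (1 - a) = 0 by exact: sym_steinberg.
have st_ai : sym a * sym (1 - a^-1) = 0.
  by rewrite (symV a0) mulNr -mulrA sym_steinberg // mulr0 oppr0.
have prod0 : sym a * sym (- a) * pform (1 - a^-1) = 0.
  by move: st_a; rewrite one_sub symMR // mulrDr st_ai add0r mulrA.
by rewrite -[sym a * _]mulr1 -(pformV d0) mulrA prod0 mul0r.
Qed.

Lemma sym_anticomm a b : a != 0 -> b != 0 ->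
  sym b * sym a = - (pform (-1) * (sym a * sym b)).
Proof.
move=> a0 b0.
have ab0 : a * b != 0 by rewrite mulf_neq0.
have na0 : - a != 0 by rewrite oppr_eq0.
have nb0 : - b != 0 by rewrite oppr_eq0.
have n10 : (-1 : K) != 0 by rewrite oppr_eq0 oner_neq0.
have left_a : sym a * sym (- (a * b)) = pform (- a) * (sym a * sym b).
  by rewrite -mulNr symML // mulrDr sym_symN // add0r mulrA -pform_symC // mulrA.
have left_b : sym b * sym (- (a * b)) = sym b * sym a.
  rewrite -mulrN symML // mulrDr mulrA -pform_symC // -mulrA sym_symN //.
  by rewrite mulr0 addr0.
have := sym_symN ab0; rewrite symML // mulrDl left_a -mulrA left_b => sum0.
have : pform a^-1 * (pform (- a) * (sym a * sym b) + pform a * (sym b * sym a)) = 0.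
  by rewrite sum0 mulr0.
rewrite mulrDr !mulrA -pformM ?invr_eq0 // pformVl // mul1r.
have -> : a^-1 * - a = -1 by rewrite mulrN mulVf.
by move/eqP; rewrite addrC addr_eq0 => /eqP ->.
Qed.

Lemma pformN1_sq : pform (-1) * pform (-1) = 1.
Proof.
have n10 : (-1 : K) != 0 by rewrite oppr_eq0 oner_neq0.
by rewrite -pformM // mulrNN mulr1 pform1.
Qed.

Lemma sym_sq a : a != 0 -> sym a * sym a = sym (-1) * sym a.
Proof.
move=> a0; have n10 : (-1 : K) != 0 by rewrite oppr_eq0 oner_neq0.
move: (sym_symN a0); rewrite -[- a]mulN1r symML // mulrDr mulrA -pform_symC //.
rewrite -mulrA (sym_anticomm n10 a0) => /eqP; rewrite addrC addr_eq0 opprK => /eqP h.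
by rewrite -[sym a * sym a]mul1r -pformN1_sq -mulrA h mulrA pformN1_sq mul1r.
Qed.

(* The Steinberg relation for xk, written via 1 - xk = yk', expresses [x][y]
   through [k], [k'] and products having only one of [x], [y]. *)
Lemma sym_steinberg_lin x y k k' : x != 0 -> y != 0 -> k != 0 -> k' != 0 ->
  x * k != 1 -> 1 - x * k = y * k' ->
  sym x * sym y = - (pform k^-1 * pform k'^-1 *
     (sym k * sym k' + pform k' * sym k * sym y + pform k * (sym x * sym k'))).
Proof.
move=> x0 y0 k0 k'0 xk1 eq1xk.
have xk0 : x * k != 0 by rewrite mulf_neq0.
have := sym_steinberg xk0 xk1; rewrite eq1xk !symMR //.
set T := _ + _ + _.
have expand : (sym k + sym x * pform k) * (sym k' + sym y * pform k') =
    T + pform k * pform k' * (sym x * sym y).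
  rewrite mulrDl !mulrDr /T !addrA; congr (_ + _ + _ + _).
  - by rewrite -(pform_symC k'0 y0) mulrA -pform_symC.
  - by rewrite -(pform_symC k0 x0) mulrA.
  - rewrite -(pform_symC k0 x0) -(pform_symC k'0 y0) !mulrA.
    by rewrite -[pform k * sym x * pform k']mulrA -(pform_symC k'0 x0) mulrA.
rewrite expand => /eqP; rewrite addrC addr_eq0 => /eqP eqT.
have pform_kk'C : pform k'^-1 * pform k = pform k * pform k'^-1.
  by rewrite -!pformM ?invr_eq0 // mulrC.
have inv_kk' : pform k^-1 * pform k'^-1 * (pform k * pform k') = 1.
  rewrite mulrA -[pform k^-1 * pform k'^-1 * pform k]mulrA pform_kk'C.
  by rewrite mulrA pformVl // mul1r pformVl.
by rewrite -[T]opprK -eqT mulrN opprK mulrA inv_kk' mul1r.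
Qed.
End MilnorWittIdentities.

Section LinearFactorization.
Import Pdiv.Field.
Variable E : fieldType.

Lemma root_size2 (f : {poly E}) : size f = 2%N -> exists a, root f a.
Proof.
move=> sf; have f1 : f`_1 != 0.
  have : lead_coef f != 0 by rewrite lead_coef_eq0 -size_poly_gt0 sf.
  by rewrite lead_coefE sf.
exists (- f`_0 / f`_1); rewrite /root horner_coef sf big_ord_recl big_ord1 /=.
by rewrite expr0 expr1 mulr1; apply/eqP; rewrite /bump /=; field.
Qed.

(* If every finite extension of E of degree prime to the prime n is
   trivial, every polynomial of degree in [1, n) has a root in E: an
   irreducible factor of degree d defines an extension of degree d. *)
Lemma small_polys_have_roots (n : nat) : prime n ->
  (forall L : fieldExtType E,
      coprime (\dim (fullv : {vspace L})) n -> \dim (fullv : {vspace L}) = 1%N) ->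
  forall f : {poly E}, (1 < size f)%N -> (size f <= n)%N -> exists a, root f a.
Proof.
move=> pn trivial_ext f; move: {2}(size f) (leqnn (size f)) => m.
elim: m f => [|m IH] f fm f1 fn; first by move: (leq_trans f1 fm).
have f0 : f != 0 by rewrite -size_poly_gt0 (ltn_trans _ f1).
have sf_pos : (0 < (size f).-1)%N by rewrite -ltnS prednK // (ltn_trans _ f1).
have [irr|nirr] := boolp.pselect (irreducible_poly f).
  set g := (lead_coef f)^-1 *: f.
  have lf0 : (lead_coef f)^-1 != 0 by rewrite invr_eq0 lead_coef_eq0.
  have gf : g %= f by apply: eqp_scale.
  have sg : size g = size f by rewrite size_scale.
  have mg : g \is monic by rewrite monicE lead_coefZ mulVf // lead_coef_eq0.
  have ig : irreducible_poly g.
    split; first by rewrite sg.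
    move=> q q1 qg; have qf : q %| f by rewrite -(eqp_dvdr _ gf).
    by apply: (eqp_trans (irr.2 q q1 qf)); rewrite eqp_sym.
  have hI : monic_irreducible_poly g by split.
  have dimL : \dim (fullv : {vspace {poly %/ g with hI}}) = (size g).-1.
    by rewrite -[in RHS](mk_monicE hI); exact: dim_polyn.
  have cp : coprime (size f).-1 n.
    rewrite coprime_sym prime_coprime // gtnNdvd //.
    by rewrite (leq_trans _ fn) // prednK // (ltn_trans _ f1).
  have := trivial_ext {poly %/ g with hI}; rewrite dimL sg => /(_ cp) sf1.
  by apply: root_size2; rewrite -[size f]prednK ?sf1 // (ltn_trans _ f1).
have [q [q1 [qf nqf]]] : exists q : {poly E}, size q != 1%N /\ q %| f /\ ~ (q %= f).
  apply: boolp.contrapT => hq; apply: nirr; split => // q q1 qf.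
  by apply: boolp.contrapT => nq; apply: hq; exists q.
have q0 : q != 0 by apply/eqP => q0; move: qf; rewrite q0 dvd0p (negPf f0).
have sq1 : (1 < size q)%N by rewrite ltn_neqAle eq_sym q1 size_poly_gt0.
have sqf : (size q < size f)%N.
  by rewrite ltn_neqAle dvdp_leq // andbT (dvdp_size_eqp qf); apply/negP.
have sqm : (size q <= m)%N by rewrite -ltnS (leq_trans sqf fm).
have [a ra] := IH q sqm sq1 (leq_trans (ltnW sqf) fn).
by exists a; apply: root_dvdp qf ra.
Qed.

Variable F : fieldExtType E.
Local Notation n := (\dim (fullv : {vspace F})).

Lemma degree_hyp_roots :
  (n = 2%N \/ (prime n /\ forall L : fieldExtType E,
      coprime (\dim (fullv : {vspace L})) n -> \dim (fullv : {vspace L}) = 1%N)) ->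
  prime n /\ forall f : {poly E}, (1 < size f)%N -> (size f <= n)%N -> exists a, root f a.
Proof.
case=> [n2|[pn trivial_ext]]; last by split=> //; exact: small_polys_have_roots.
split=> [|f f1 fn]; first by rewrite n2.
by apply: root_size2; apply/eqP; rewrite eqn_leq f1 andbT -n2.
Qed.

Inductive linprod (al : F) : F -> Prop :=
| linprod_const (c : E) : c != 0 -> linprod al (c%:A)
| linprod_lin (a : E) (b : F) : linprod al b -> linprod al ((al - a%:A) * b).

Hypothesis roots : forall f : {poly E},
  (1 < size f)%N -> (size f <= n)%N -> exists a, root f a.

Lemma linprod_horner (al : F) (f : {poly E}) : (size f <= n)%N ->
  (map_poly (in_alg F) f).[al] != 0 -> linprod al (map_poly (in_alg F) f).[al].
Proof.
move: {2}(size f) (leqnn (size f)) => m; elim: m f => [|m IH] f fm fn.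
  by move: fm; rewrite leqn0 size_poly_eq0 => /eqP ->; rewrite rmorph0 horner0 eqxx.
have [f1|f1] := leqP (size f) 1.
  rewrite [f]size1_polyC // map_polyC hornerC /= => c0; apply: linprod_const.
  by apply: contra_neq c0 => ->; rewrite scale0r.
have [a ra] := roots f1 fn.
have [g fg] := factor_theorem _ _ ra.
have f0 : f != 0 by rewrite -size_poly_gt0 (ltn_trans _ f1).
have g0 : g != 0 by apply/eqP => g0; move: f0; rewrite fg g0 mul0r eqxx.
have sfg : size f = (size g).+1.
  by rewrite fg size_Mmonic ?monicXsubC // size_XsubC addn2.
rewrite fg rmorphM /= map_polyXsubC hornerM hornerXsubC mulrC /= => fal0.
apply: linprod_lin; apply: IH; first by rewrite -ltnS -sfg.
  by rewrite (leq_trans (leqnSn _)) // -sfg.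
by move: fal0; rewrite mulf_eq0 negb_or => /andP[].
Qed.

(* In prime degree any al outside E generates F, so every element is a
   polynomial of degree < n in al, hence a product of linear factors. *)
Lemma exists_linprod_generator : prime n ->
  exists al : F, (forall a : E, al != a%:A) /\ forall b : F, b != 0 -> linprod al b.
Proof.
move=> pn; have [al alE] : exists al : F, al \notin (1%VS : {vspace F}).
  apply: boolp.contrapT => all_in.
  have sub : (fullv <= (1%VS : {vspace F}))%VS.
    apply/subvP => x _; apply: boolp.contrapT => x1; apply: all_in.
    by exists x; apply/negP.
  by have := dimvS sub; rewrite dimv1 leqNgt prime_gt1.
exists al; split=> [a|b b0].
  by apply: contra alE => /eqP ->; rewrite memvZ // mem1v.
set d := adjoin_degree 1%VS al.
have d_dvd : (d %| n)%N.
  by have := field_dimS (subvf <<1%AS; al>>%AS); rewrite dim_Fadjoin dimv1 muln1.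
have d1 : d != 1%N by rewrite adjoin_deg_eq1.
have dn : d = n by have [_ /(_ d d_dvd)] := primeP pn; rewrite (negPf d1) => /eqP.
have full : <<1%VS; al>>%VS = fullv.
  apply/eqP; rewrite eqEdim subvf dim_Fadjoin dimv1 muln1 /=.
  by have -> : adjoin_degree 1 al = d by []; rewrite dn.
have bin : b \in <<1%VS; al>>%VS by rewrite full memvf.
have [f f_def] := polyOver1P (Fadjoin_polyOver 1%VS al b).
have := Fadjoin_poly_eq bin; rewrite f_def => b_def.
rewrite -b_def; apply: linprod_horner; last by rewrite b_def.
by rewrite -(size_map_poly (in_alg F)) -f_def -dn size_Fadjoin_poly.
Qed.
End LinearFactorization.

Section Generation.
Variables (E : fieldType) (F : fieldExtType E).
Local Notation KF := (KMW F).

(* The symbol [x] in K^MW(F), extended by 0 at x = 0, and eta. *)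
Definition msym (x : F) : KF := if insub x is Some u then kmw (MWsym u) else 0.
Definition meta : KF := kmw MWeta.

Lemma msym_unit (u : unitF F) : msym (val u) = kmw (MWsym u).
Proof. by rewrite /msym valK. Qed.

Lemma msym_val (a : F) (a0 : a != 0) : msym a = kmw (MWsym (exist _ a a0)).
Proof. exact: (msym_unit (exist _ a a0)). Qed.

Lemma msym0 : msym 0 = 0.
Proof. by rewrite /msym insubF // eqxx. Qed.

Lemma msym_steinberg (a : F) : a != 0 -> a != 1 -> msym a * msym (1 - a) = 0.
Proof.
move=> a0 a1; have b0 : 1 - a != 0 by rewrite subr_eq0 eq_sym.
rewrite (msym_val a0) (msym_val b0) -kmw0 -kmwM; apply/kmw_eqP.
by apply: mweq_steinberg => /=; rewrite addrC subrK.
Qed.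

Lemma msymM (a b : F) : a != 0 -> b != 0 ->
  msym (a * b) = msym a + msym b + meta * (msym a * msym b).
Proof.
move=> a0 b0; have ab0 : a * b != 0 by rewrite mulf_neq0.
have /kmw_eqP := @mweq_symM F (exist _ a a0) (exist _ b b0) (exist _ (a * b) ab0) erefl.
by rewrite !kmwD !kmwM -!msym_val.
Qed.

Lemma meta_symC (a : F) : meta * msym a = msym a * meta.
Proof.
have [->|a0] := eqVneq a 0; first by rewrite msym0 mulr0 mul0r.
by rewrite (msym_val a0) -!kmwM; apply/kmw_eqP; exact: mweq_etaC.
Qed.

Lemma meta_hyperbolic : meta * (1 + 1 + meta * msym (-1)) = 0.
Proof.
have m0 : (-1 : F) != 0 by rewrite oppr_eq0 oner_neq0.
have /kmw_eqP := @mweq_hyp F (exist _ (-1) m0) erefl.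
by rewrite !kmwM !kmwD kmwM kmw1 kmw0 -msym_val.
Qed.

Local Notation pformF := (pform msym meta).

Lemma msym_anticomm a b : a != 0 -> b != 0 ->
  msym b * msym a = - (pformF (-1) * (msym a * msym b)).
Proof. by apply: sym_anticomm; [exact: msym_steinberg | exact: msymM |
  exact: meta_symC | exact: meta_hyperbolic]. Qed.

Lemma msym_sq a : a != 0 -> msym a * msym a = msym (-1) * msym a.
Proof. by apply: sym_sq; [exact: msym_steinberg | exact: msymM |
  exact: meta_symC | exact: meta_hyperbolic]. Qed.

Lemma msym_steinberg_lin x y k k' : x != 0 -> y != 0 -> k != 0 -> k' != 0 ->
  x * k != 1 -> 1 - x * k = y * k' ->
  msym x * msym y = - (pformF k^-1 * pformF k'^-1 *
     (msym k * msym k' + pformF k' * msym k * msym y + pformF k * (msym x * msym k'))).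
Proof. by apply: sym_steinberg_lin; [exact: msym_steinberg | exact: msymM |
  exact: meta_symC | exact: meta_hyperbolic]. Qed.

Definition in_res (q : KF) := exists y, q = kmw (mwres F y).

Lemma in_res1 : in_res 1. Proof. by exists MW1. Qed.
Lemma in_res_eta : in_res meta. Proof. by exists MWeta. Qed.
Lemma in_resD p q : in_res p -> in_res q -> in_res (p + q).
Proof. by move=> [y ->] [z ->]; exists (MWadd y z); rewrite /= kmwD. Qed.
Lemma in_resM p q : in_res p -> in_res q -> in_res (p * q).
Proof. by move=> [y ->] [z ->]; exists (MWmul y z); rewrite /= kmwM. Qed.
Lemma in_resN p : in_res p -> in_res (- p).
Proof. by move=> [y ->]; exists (MWopp y); rewrite /= kmwN. Qed.

Lemma in_res_sym (c : E) : in_res (msym c%:A).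
Proof.
have [->|c0] := eqVneq c 0; first by exists MW0; rewrite scale0r msym0.
by exists (MWsym (exist _ c c0)); rewrite /= -msym_unit.
Qed.

Lemma in_res_pform (c : E) : in_res (pformF c%:A).
Proof. by rewrite pformE; apply: in_resD in_res1 (in_resM in_res_eta (in_res_sym c)). Qed.

Lemma in_res_symN1 : in_res (msym (-1)).
Proof. by have := in_res_sym (-1); rewrite scaleN1r. Qed.

Lemma in_res_pformN1 : in_res (pformF (-1)).
Proof. by have := in_res_pform (-1); rewrite scaleN1r. Qed.

Variables (al : F) (alE : forall a : E, al != a%:A).
Local Notation lin a := (al - a%:A).

Lemma lin_neq0 a : lin a != 0.
Proof. by rewrite subr_eq0; exact: alE. Qed.

Inductive lin_span : KF -> Prop :=
| lin_span0 : lin_span 0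
| lin_span_res r : in_res r -> lin_span r
| lin_span_lin r a : in_res r -> lin_span (r * msym (lin a))
| lin_spanD p q : lin_span p -> lin_span q -> lin_span (p + q).

Lemma lin_spanN p : lin_span p -> lin_span (- p).
Proof.
elim=> [|r hr|r a hr|p' q _ hp _ hq].
- by rewrite oppr0; exact: lin_span0.
- exact/lin_span_res/in_resN.
- by rewrite -mulNr; apply/lin_span_lin/in_resN.
- by rewrite opprD; exact: lin_spanD.
Qed.

Lemma lin_span_mull t p : in_res t -> lin_span p -> lin_span (t * p).
Proof.
move=> ht; elim=> [|r hr|r a hr|p' q _ hp _ hq].
- by rewrite mulr0; exact: lin_span0.
- exact/lin_span_res/in_resM.
- by rewrite mulrA; apply/lin_span_lin/in_resM.
- by rewrite mulrDr; exact: lin_spanD.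
Qed.

Lemma lin_span_mulr_gen (c : KF) :
  (forall r, in_res r -> lin_span (r * c)) ->
  (forall r a, in_res r -> lin_span (r * msym (lin a) * c)) ->
  forall m, lin_span m -> lin_span (m * c).
Proof.
move=> on_res on_lin m; elim=> [|r hr|r a hr|p' q _ hp _ hq].
- by rewrite mul0r; exact: lin_span0.
- exact: on_res.
- exact: on_lin.
- by rewrite mulrDl; exact: lin_spanD.
Qed.

Lemma lin_span_mul_eta m : lin_span m -> lin_span (m * meta).
Proof.
apply: lin_span_mulr_gen => [r hr|r a hr].
  by apply/lin_span_res/in_resM => //; exact: in_res_eta.
by rewrite -mulrA -meta_symC mulrA; apply/lin_span_lin/in_resM => //; exact: in_res_eta.
Qed.

Lemma lin_span_mul_const (c : E) m : lin_span m -> lin_span (m * msym c%:A).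
Proof.
have [->|c0] := eqVneq c 0.
  by rewrite scale0r msym0 mulr0 => _; exact: lin_span0.
have cA0 : c%:A != 0 :> F by rewrite -in_algE fmorph_eq0.
apply: lin_span_mulr_gen => [r hr|r a hr].
  by apply/lin_span_res/in_resM => //; exact: in_res_sym.
rewrite -mulrA msym_anticomm ?lin_neq0 // mulrN !mulrA -mulNr.
apply/lin_span_lin/in_resN/in_resM; last exact: in_res_sym.
by apply: in_resM => //; exact: in_res_pformN1.
Qed.

(* [al - a'][al - a] lies in the span: for a = a' use [x][x] = [-1][x],
   otherwise the Steinberg relation for the two linear forms. *)
Lemma lin_span_lin_pair a a' : lin_span (msym (lin a') * msym (lin a)).
Proof.
have [<-|aa'] := eqVneq a a'.
  by rewrite msym_sq ?lin_neq0 //; apply: lin_span_lin; exact: in_res_symN1.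
set k := (a%:A - a'%:A : F)^-1; set k' := (a'%:A - a%:A : F)^-1.
have d0 : a%:A - a'%:A != 0 :> F by rewrite -!in_algE -rmorphB fmorph_eq0 subr_eq0.
have d'0 : a'%:A - a%:A != 0 :> F by rewrite -opprB oppr_eq0.
have k0 : k != 0 by rewrite invr_eq0.
have k'0 : k' != 0 by rewrite invr_eq0.
have kE : k = ((a - a')^-1)%:A by rewrite /k -!in_algE -rmorphB fmorphV.
have k'E : k' = ((a' - a)^-1)%:A by rewrite /k' -!in_algE -rmorphB fmorphV.
have kVE : k^-1 = (a - a')%:A by rewrite /k invrK -!in_algE rmorphB.
have k'VE : k'^-1 = (a' - a)%:A by rewrite /k' invrK -!in_algE rmorphB.
have lin_k1 : lin a' * k != 1.
  apply: contra (alE a) => /eqP /(congr1 (fun z => z * (a%:A - a'%:A))).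
  by rewrite mul1r mulfVK // => /(congr1 (fun z => z + a'%:A)); rewrite !subrK => ->.
have lin_rel : 1 - lin a' * k = lin a * k'.
  by rewrite /k /k'; field; rewrite d0 d'0.
rewrite (msym_steinberg_lin (lin_neq0 a') (lin_neq0 a) k0 k'0 lin_k1 lin_rel).
apply/lin_spanN/lin_span_mull.
  by apply: in_resM; rewrite ?kVE ?k'VE; exact: in_res_pform.
apply: lin_spanD; first apply: lin_spanD.
- by apply: lin_span_res; apply: in_resM; rewrite ?kE ?k'E; exact: in_res_sym.
- apply: lin_span_lin; apply: in_resM; rewrite ?kE ?k'E.
    exact: in_res_pform.
  exact: in_res_sym.
- rewrite msym_anticomm ?lin_neq0 // mulrN !mulrA -mulNr; apply: lin_span_lin.
  apply/in_resN/in_resM; last by rewrite k'E; exact: in_res_sym.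
  by apply: in_resM; [rewrite kE; exact: in_res_pform | exact: in_res_pformN1].
Qed.

Lemma lin_span_mul_lin a m : lin_span m -> lin_span (m * msym (lin a)).
Proof.
apply: lin_span_mulr_gen => [r hr|r a' hr]; first exact: lin_span_lin.
by rewrite -mulrA; apply: lin_span_mull => //; exact: lin_span_lin_pair.
Qed.

Lemma linprod_neq0 b : linprod al b -> b != 0.
Proof.
by elim=> [c c0|a b' _ b'0]; [rewrite -in_algE fmorph_eq0 | rewrite mulf_neq0 ?lin_neq0].
Qed.

(* By [ab] = [a] + [b] + eta[a][b], products of linear factors reduce to
   the cases already treated. *)
Lemma lin_span_mul_linprod b : linprod al b ->
  forall m, lin_span m -> lin_span (m * msym b).
Proof.
elim=> [c c0|a b' lb' IH] m hm; first exact: lin_span_mul_const.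
rewrite msymM ?lin_neq0 ?linprod_neq0 // !mulrDr.
apply: lin_spanD; first apply: lin_spanD.
- exact: lin_span_mul_lin.
- exact: IH.
- by rewrite !mulrA; apply/IH/lin_span_mul_lin/lin_span_mul_eta.
Qed.

(* If every nonzero element is a product of linear factors, the span is a
   right ideal, hence all of K^MW(F) since it contains 1. *)
Lemma lin_span_mul_term (t : mwterm F) :
  (forall b : F, b != 0 -> linprod al b) ->
  forall m, lin_span m -> lin_span (m * kmw t).
Proof.
move=> all_linprod; elim: t => [u||||x IHx y IHy|x IHx|x IHx y IHy] m hm.
- by rewrite -msym_unit; apply: lin_span_mul_linprod => //; exact: all_linprod (valP u).
- exact: lin_span_mul_eta.
- by rewrite kmw0 mulr0; exact: lin_span0.
- by rewrite kmw1 mulr1.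
- by rewrite kmwD mulrDr; apply: lin_spanD; [exact: IHx | exact: IHy].
- by rewrite kmwN mulrN; apply/lin_spanN/IHx.
- by rewrite kmwM mulrA; apply/IHy/IHx.
Qed.

Lemma lin_span_sum q : lin_span q -> exists s : seq (mwterm E * option (unitF F)),
  q = kmw (mwsum [seq MWmul (mwres F x.1) (mwgen x.2) | x <- s]).
Proof.
elim=> [|r [y ->]|r a [y ->]|p1 q1 _ [s1 ->] _ [s2 ->]].
- by exists [::].
- by exists [:: (y, None)]; rewrite /= kmwD kmwM kmw0 kmw1 mulr1 addr0.
- exists [:: (y, Some (exist _ (lin a) (lin_neq0 a)))].
  by rewrite /= kmwD kmwM kmw0 addr0 -msym_val.
- exists (s1 ++ s2); rewrite map_cat; elim: s1 => [|x s1 IH] /=; first by rewrite add0r.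
  by rewrite !kmwD -IH addrA.
Qed.
End Generation.

Theorem mainTheorem11 (E : fieldType) (F : fieldExtType E) :
  ((\dim (fullv : {vspace F}))%N = 2%N \/
   (prime (\dim (fullv : {vspace F})) /\
    forall L : fieldExtType E,
      coprime (\dim (fullv : {vspace L})) (\dim (fullv : {vspace F})) ->
      (\dim (fullv : {vspace L}))%N = 1%N)) ->
  forall t : mwterm F,
    exists s : seq (mwterm E * option (unitF F)),
      mweq t (mwsum [seq MWmul (mwres F x.1) (mwgen x.2) | x <- s]).
Proof.
move=> hyp t; have [pn roots] := degree_hyp_roots hyp.
have [al [alE all_linprod]] := exists_linprod_generator roots pn.
have := lin_span_mul_term alE t all_linprod (lin_span_res al (in_res1 F)).
rewrite mul1r => /(lin_span_sum alE) [s t_s].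
by exists s; apply/kmw_eqP.
Qed.
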